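(* Insert $2^k$ values one at a time into an initially empty black-white array (BWA). The chronological order in which the nodes of the BWA merge tree are realized is exactly the post-order traversal of that tree. Here a leaf is realized when its value is inserted, and an internal node is realized when the merge it represents is performed.
   Context: A black-white array (BWA) of size $N=2^K$ stores values from a totally ordered set. It has a white array $W[1..N-1]$ and a black array $B[1..N/2-1]$. For $i\ge0$, the segment of rank $i$ of either array is the index block $[2^i,2^{i+1}-1]$. A state variable $\mathtt{total}$ counts stored values and is initially $0$. The rank-$i$ segment is active iff bit $i$ of $\mathtt{total}$ is $1$. Insert$(v)$: if rank 0 is inactive, set $W[1]=v$; otherwise set $B[1]=v$ and perform $\mathrm{merge}(0)$. $\mathrm{merge}(i)$: merge the sorted white and black segments of rank $i$. The result goes into the white rank-$(i+1)$ segment if that segment is inactive. Otherwise it goes into the black rank-$(i+1)$ segment, followed by $\mathrm{merge}(i+1)$. When an insertion completes, $\mathtt{total}$ has increased by one. The BWA merge tree for $2^k$ insertions is the complete binary tree with $2^k$ leaves. Its leaves are the inserted values, from left to right in insertion order, and represent rank-0 segments. Each internal node at height $j$ represents the rank-$j$ segment produced by merging the two segments represented by its children. Post-order traversal visits the left subtree, then the right subtree, then the node. *)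

From mathcomp Require Import all_boot all_order.
Set Implicit Arguments. Unset Strict Implicit. Unset Printing Implicit Defensive.
Import Order.TTheory.
Local Open Scope order_scope.

(* Binary trees whose leaves are labelled by insertion indices (0-based). *)
Inductive btree := BLeaf of nat | BNode of btree & btree.

Fixpoint postorder (t : btree) : seq btree :=
  match t with
  | BLeaf _ => [:: t]
  | BNode l r => postorder l ++ postorder r ++ [:: t]
  end.

(* The complete binary tree of height j whose leaves are, from left to
   right, the insertion indices a*2^j, ..., a*2^j + 2^j - 1. *)
Fixpoint ctree (j a : nat) : btree :=
  match j with
  | 0 => BLeaf a
  | j'.+1 => BNode (ctree j' a.*2) (ctree j' a.*2.+1)
  end.

Definition bwa_merge_tree (k : nat) : btree := ctree k 0.

Definition nbit (i n : nat) : bool := odd (n %/ 2 ^ i).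

Section BWA.
Context {d : Order.disp_t} {T : orderType d}.

(* A segment: its (sorted) content, together with the merge-tree node it
   represents (its provenance). *)
Definition segment := (seq T * btree)%type.

Definition upd (f : nat -> segment) (i : nat) (x : segment) : nat -> segment :=
  fun j => if j == i then x else f j.

Record bwa := BWA {
  total : nat;
  white : nat -> segment;
  black : nat -> segment;
  log   : seq btree         (* tree nodes realized so far, chronologically *)
}.

Definition empty_seg : segment := ([::], BLeaf 0).

Definition bwa_empty : bwa := BWA 0 (fun _ => empty_seg) (fun _ => empty_seg) [::].

Definition active (s : bwa) (i : nat) : bool := nbit i (total s).

(* merge(i), performed on a state whose total has not yet been incremented.
   The merged segment represents the node whose children are the nodes of
   the white (left) and black (right) rank-i segments; performing the merge
   realizes that node, which is appended to the log.  [fuel] only ensures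
   termination (it never runs out when fuel >= total s). *)
Fixpoint bwa_merge (fuel : nat) (i : nat) (s : bwa) : bwa :=
  let m : segment := (merge <=%O (white s i).1 (black s i).1,
                      BNode (white s i).2 (black s i).2) in
  let lg := rcons (log s) m.2 in
  if ~~ active s i.+1 then BWA (total s) (upd (white s) i.+1 m) (black s) lg
  else match fuel with
       | 0 => BWA (total s) (white s) (black s) lg
       | f.+1 => bwa_merge f i.+1 (BWA (total s) (white s) (upd (black s) i.+1 m) lg)
       end.

(* Insert(v): the leaf realized is the one labelled by the insertion index
   (= current total).  total is incremented once the insertion completes. *)
Definition bwa_insert (v : T) (s : bwa) : bwa :=
  let t := total s in
  let leaf : segment := ([:: v], BLeaf t) in
  let lg := rcons (log s) (BLeaf t) in
  let s' := if ~~ active s 0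
            then BWA t (upd (white s) 0 leaf) (black s) lg
            else bwa_merge t 0 (BWA t (white s) (upd (black s) 0 leaf) lg) in
  BWA t.+1 (white s') (black s') (log s').

Definition bwa_insert_all (vs : seq T) (s : bwa) : bwa :=
  foldl (fun s v => bwa_insert v s) s vs.

End BWA.

From mathcomp Require Import all_boot all_order zify.
Set Implicit Arguments. Unset Strict Implicit. Unset Printing Implicit Defensive.

(* Insertion m (counting from 0) realizes leaf m and then performs one merge per
   trailing 1-bit of m, i.e. logn 2 (m+1) merges, the merge at rank i producing
   the node over the last 2^(i+1) inserted values.  So insertion m logs,
   bottom-up, the complete subtrees whose rightmost leaf is m.  Splitting a
   block of 2^(k+1) leaves into its halves, induction on k shows that this is
   post-order: each half logs its own post-order, and the root of the block is
   realized last, by the final insertion of the block. *)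

Lemma divnS_dvd n d : 0 < d -> d %| n.+1 -> n.+1 %/ d = (n %/ d).+1.
Proof. by move=> d_gt0 dvd; rewrite divnS // dvd. Qed.

Lemma nbit_multiple j m : 2 ^ j.+1 %| m -> ~~ nbit j m.
Proof.
case/dvdnP=> q ->; rewrite /nbit expnS mulnCA mulnA mulnK ?expn_gt0 //.
by rewrite oddM.
Qed.

Lemma nbit_dvdS i n : 2 ^ i %| n.+1 -> nbit i n = (2 ^ i.+1 %| n.+1).
Proof.
move=> dvd; have pos2i : 0 < 2 ^ i by rewrite expn_gt0.
have /dvdnP [q def_n1] := dvd.
have def_q : q = (n %/ 2 ^ i).+1 by rewrite -divnS_dvd // def_n1 mulnK.
by rewrite /nbit def_n1 expnS dvdn_pmul2r // def_q dvdn2 /= negbK.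
Qed.

(* After n insertions, an active rank-j segment holds the last complete block
   of 2^j consecutive leaves. *)
Definition rank_node (j n : nat) : btree := ctree j (n %/ 2 ^ j).-1.

Lemma rank_node_merge i n : 2 ^ i.+1 %| n.+1 ->
  BNode (rank_node i n) (rank_node i n.+1) = rank_node i.+1 n.+1.
Proof.
case/dvdnP=> q def_n1; have pos2i : 0 < 2 ^ i by rewrite expn_gt0.
have div_n1 : n.+1 %/ 2 ^ i = q.*2.
  by rewrite def_n1 expnS mulnCA mulnA mulnK // mul2n.
have div_n : n %/ 2 ^ i = q.*2.-1.
  by rewrite -div_n1 divnS_dvd // def_n1 expnS mulnCA !dvdn_mull.
rewrite /rank_node div_n1 div_n def_n1 mulnK ?expn_gt0 //.
by case: q def_n1 {div_n1 div_n} => [|p] //; rewrite doubleS.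
Qed.

Definition insertion_log (m : nat) : seq btree :=
  [seq rank_node j m.+1 | j <- iota 0 (logn 2 m.+1).+1].
(* Otherwise [simpl] expands it as soon as it occurs under [drop] or [cat]. *)
Arguments insertion_log : simpl never.

Lemma drop_insertion_log i m : 2 ^ i %| m.+1 ->
  drop i (insertion_log m) = rank_node i m.+1 :: drop i.+1 (insertion_log m).
Proof.
rewrite pfactor_dvdn // => le_i_log.
by rewrite -!map_drop !drop_iota !add0n subSS subSn.
Qed.

Lemma drop_insertion_log_ndvd i m :
  ~~ (2 ^ i %| m.+1) -> drop i (insertion_log m) = [::].
Proof.
rewrite pfactor_dvdn // -ltnNge => lt_log_i.
by rewrite drop_oversize // size_map size_iota.
Qed.

Lemma take_insertion_logS k m :
  take k.+2 (insertion_log m) =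
  take k.+1 (insertion_log m) ++
  (if 2 ^ k.+1 %| m.+1 then [:: rank_node k.+1 m.+1] else [::]).
Proof.
rewrite -addn1 takeD; case: ifP => [dvd | /negbT ndvd].
  by rewrite drop_insertion_log //= take0.
by rewrite drop_insertion_log_ndvd.
Qed.

Lemma ndvdn_between a d m : a * d <= m -> m < a * d + d.-1 -> ~~ (d %| m.+1).
Proof.
move=> le_ad_m lt_m; rewrite -(subnKC (leqW le_ad_m)) dvdn_addr ?dvdn_mull //.
by rewrite gtnNdvd // ?subn_gt0 ?ltnS //; lia.
Qed.

Lemma flatten_insertion_logs_block k a :
  flatten [seq take k.+1 (insertion_log m) | m <- iota (a * 2 ^ k) (2 ^ k)] =
  postorder (ctree k a).
Proof.
elim: k a => [|k IH] a.
  by rewrite expn0 muln1 /= /insertion_log /= take0 /rank_node expn0 divn1.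
set N := 2 ^ k.+1; have N_gt0 : 0 < N by rewrite expn_gt0.
have iota_last : iota (a * N) N = rcons (iota (a * N) N.-1) (a.+1 * N).-1.
  by rewrite -cats1 {2}(_ : N = N.-1 + 1) ?iotaD; [congr (_ ++ [:: _]) | ]; lia.
have iota_halves :
    iota (a * N) N = iota (a.*2 * 2 ^ k) (2 ^ k) ++ iota (a.*2.+1 * 2 ^ k) (2 ^ k).
  by rewrite /N expnS mul2n -addnn iotaD; congr (iota _ _ ++ iota _ _); nia.
have take_last : take k.+2 (insertion_log (a.+1 * N).-1) =
    take k.+1 (insertion_log (a.+1 * N).-1) ++ [:: ctree k.+1 a].
  by rewrite take_insertion_logS prednK ?muln_gt0 // dvdn_mull // /rank_node mulnK.
rewrite iota_last map_rcons flatten_rcons take_last.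
rewrite [RHS]/= -!IH [RHS]catA -flatten_cat -map_cat -iota_halves.
rewrite iota_last map_rcons flatten_rcons -catA; congr (flatten _ ++ _).
apply/eq_in_map => m; rewrite mem_iota => /andP [le_aN_m lt_m].
by rewrite take_insertion_logS (negbTE (ndvdn_between le_aN_m lt_m)) cats0.
Qed.

Lemma take_insertion_log_id k m : m < 2 ^ k -> take k.+1 (insertion_log m) = insertion_log m.
Proof.
move=> lt_m; rewrite -[RHS](cat_take_drop k.+1) drop_insertion_log_ndvd ?cats0 //.
by rewrite gtnNdvd // (leq_ltn_trans lt_m) // ltn_exp2l.
Qed.

Section BWA.
Context {d : Order.disp_t} {T : orderType d}.

Definition represents (n : nat) (w : nat -> @segment d T) : Prop :=
  forall j, nbit j n -> (w j).2 = rank_node j n.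

Lemma represents_upd n w i x : represents n w ->
  2 ^ i %| n.+1 -> ~~ (2 ^ i.+1 %| n.+1) -> x.2 = rank_node i n.+1 ->
  represents n.+1 (upd w i x).
Proof.
move=> rep dvd_i ndvd_i1 x_node j; rewrite /upd.
case: (ltngtP j i) => [lt_ji | lt_ij | ->] // bit_j.
  by move: bit_j; rewrite (negbTE (nbit_multiple _)) // (dvdn_trans (dvdn_exp2l 2 lt_ji)).
have ndvd_j : ~~ (2 ^ j %| n.+1).
  by apply: contra ndvd_i1; apply: dvdn_trans; apply: dvdn_exp2l.
have same_div : n.+1 %/ 2 ^ j = n %/ 2 ^ j by rewrite divnS ?expn_gt0 // (negbTE ndvd_j).
by move: bit_j; rewrite /nbit /rank_node same_div; apply: rep.
Qed.

Lemma bwa_merge_spec fuel i n (s : bwa) :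
  total s = n -> n <= i + fuel -> represents n (white s) ->
  (black s i).2 = rank_node i n.+1 -> 2 ^ i.+1 %| n.+1 ->
  [/\ total (bwa_merge fuel i s) = n, represents n.+1 (white (bwa_merge fuel i s))
    & log (bwa_merge fuel i s) = log s ++ drop i.+1 (insertion_log n)].
Proof.
elim: fuel i s => [|fuel IH] i s total_s le_n rep black_i dvd_i1.
  (* The fuel cannot run out: 2^(i+1) divides n+1, hence i < n. *)
  have := dvdn_leq (ltn0Sn n) dvd_i1; have := ltn_expl i.+1 (ltnSn 1); lia.
have merged : BNode (white s i).2 (black s i).2 = rank_node i.+1 n.+1.
  rewrite black_i rep ?rank_node_merge // nbit_dvdS ?dvd_i1 //.
  exact: dvdn_trans (dvdn_exp2l 2 (leqnSn i)) dvd_i1.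
rewrite drop_insertion_log // -merged [bwa_merge _ _ _]/= /active total_s nbit_dvdS //.
case: ifPn => [ndvd_i2 | /negbNE dvd_i2].
  rewrite drop_insertion_log_ndvd // cats1; split=> //; exact: represents_upd.
set s' := BWA _ _ _ _.
have le_n' : n <= i.+1 + fuel by rewrite addSnnS.
have black' : (black s' i.+1).2 = rank_node i.+1 n.+1 by rewrite /= /upd eqxx.
have [-> rep' ->] := IH i.+1 s' erefl le_n' rep black' dvd_i2.
by rewrite cat_rcons.
Qed.

Definition bwa_invariant (n : nat) (s : @bwa d T) : Prop :=
  [/\ total s = n, represents n (white s)
    & log s = flatten [seq insertion_log m | m <- iota 0 n]].

Lemma bwa_insert_invariant v n s : bwa_invariant n s -> bwa_invariant n.+1 (bwa_insert v s).
Proof.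
case=> total_s rep log_s.
have leaf : BLeaf n = rank_node 0 n.+1 by rewrite /rank_node expn0 divn1.
have log_n1 : flatten [seq insertion_log m | m <- iota 0 n.+1] =
    log s ++ BLeaf n :: drop 1 (insertion_log n).
  rewrite -addn1 iotaD cats1 map_rcons flatten_rcons add0n log_s leaf.
  by rewrite -drop_insertion_log ?expn0 ?dvd1n ?drop0.
rewrite /bwa_insert /active total_s nbit_dvdS ?expn0 ?dvd1n //.
case: (boolP (2 ^ 1 %| n.+1)) => [dvd2 | ndvd2] /=.
  set s' := BWA n (white s) _ _.
  have black' : (black s' 0).2 = rank_node 0 n.+1 := leaf.
  have [_ rep' log'] := @bwa_merge_spec n 0 n s' erefl (leqnn n) rep black' dvd2.
  by split; rewrite // log' log_n1 cat_rcons.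
split=> //; first by apply: represents_upd; rewrite ?expn0 ?dvd1n.
by rewrite log_n1 drop_insertion_log_ndvd ?cats1.
Qed.

Lemma log_bwa_insert_all (vs : seq T) :
  log (bwa_insert_all vs bwa_empty) = flatten [seq insertion_log m | m <- iota 0 (size vs)].
Proof.
suff [] : bwa_invariant (size vs) (bwa_insert_all vs bwa_empty) by [].
elim/last_ind: vs => [|vs v IH]; first by split=> // j; rewrite /nbit div0n.
by rewrite size_rcons /bwa_insert_all foldl_rcons; apply: bwa_insert_invariant.
Qed.

End BWA.

Theorem mainTheorem5 (d : Order.disp_t) (T : orderType d) (k : nat) (vs : seq T) :
  size vs = 2 ^ k ->
  log (bwa_insert_all vs bwa_empty) = postorder (bwa_merge_tree k).
Proof.
move=> size_vs; rewrite log_bwa_insert_all size_vs /bwa_merge_tree.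
rewrite -(flatten_insertion_logs_block k 0) mul0n; congr flatten.
by apply/eq_in_map => m; rewrite mem_iota => /andP [_ lt_m]; rewrite take_insertion_log_id.
Qed.
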